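(* Let $n>1$ be an integer and let $j_0,\dots,j_{n-1}\in\mathbb Z/(n)$ (indices read in $\mathbb Z/(n)$) satisfy $j_i=j_{-i}$ for all $i$, such that for every nonzero $i\in\mathbb Z/(n)$ there exists $k\in\mathbb Z/(n)$ with $j_{i+k}\neq j_k$, and such that the additive subgroup generated by $j_0,\dots,j_{n-1}$ is $\mathbb Z/(n)$. Define $\sigma_{(i,j)}(k,l)=(k+j,\ l-j_{k+j-i})$ on $(\mathbb Z/(n))^2$ and $r((i,j),(k,l))=(\sigma_{(i,j)}(k,l),\sigma^{-1}_{\sigma_{(i,j)}(k,l)}(i,j))$. Then $((\mathbb Z/(n))^2,r)$ is an indecomposable and irretractable solution of the YBE. If moreover $j_0-j_i$ is invertible in $\mathbb Z/(n)$ for every nonzero $i$, then $((\mathbb Z/(n))^2,r)$ is a simple solution of the YBE.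
   Context: A solution of the YBE is a pair $(X,r)$, $X$ nonempty, $r:X\times X\to X\times X$, $r(x,y)=(\sigma_x(y),\gamma_y(x))$, with $r^2=\mathrm{id}$, all $\sigma_x,\gamma_x$ bijective, and $r_{12}r_{23}r_{12}=r_{23}r_{12}r_{23}$ on $X^3$. Indecomposable: $\langle\sigma_x\rangle\le \mathrm{Sym}_X$ transitive on $X$. Irretractable: $\sigma_x\ne\sigma_y$ for $x\ne y$. A homomorphism of solutions $f:(X,r)\to(Y,s)$ (with $s(t,z)=(\sigma'_t(z),\gamma'_z(t))$) is a map with $f(\sigma_x(y))=\sigma'_{f(x)}(f(y))$; $(X,r)$ is simple if $|X|>1$ and every surjective homomorphism of solutions $f:(X,r)\to(Y,s)$ is bijective or has $|Y|=1$. *)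

From mathcomp Require Import all_boot all_order fingroup perm all_algebra.
Set Implicit Arguments. Unset Strict Implicit. Unset Printing Implicit Defensive.
Import GRing.Theory.

Section YBE.
Variable X : Type.
Variable r : X * X -> X * X.

Definition ysigma (x : X) : X -> X := fun y => (r (x, y)).1.
Definition ygamma (y : X) : X -> X := fun x => (r (x, y)).2.

Definition r12 (t : X * X * X) : X * X * X :=
  let: (x, y, z) := t in let: (a, b) := r (x, y) in (a, b, z).
Definition r23 (t : X * X * X) : X * X * X :=
  let: (x, y, z) := t in let: (b, c) := r (y, z) in (x, b, c).

Definition is_solution : Prop :=
  [/\ (forall p, r (r p) = p),
      (forall x, bijective (ysigma x)),
      (forall x, bijective (ygamma x)) &
      (forall t, r12 (r23 (r12 t)) = r23 (r12 (r23 t)))].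

(* the subgroup of Sym_X generated by the sigma_x:
   smallest set of maps containing id, closed under left composition with
   each sigma_z and with each two-sided inverse of a sigma_z *)
Inductive in_sigma_group : (X -> X) -> Prop :=
| sg_id : in_sigma_group id
| sg_sigma z g : in_sigma_group g -> in_sigma_group (ysigma z \o g)
| sg_inv z h g : cancel (ysigma z) h -> cancel h (ysigma z) ->
    in_sigma_group g -> in_sigma_group (h \o g).

Definition indecomposable : Prop :=
  forall x y : X, exists2 g, in_sigma_group g & g x = y.

Definition irretractable : Prop :=
  forall x y : X, x <> y -> ysigma x <> ysigma y.
End YBE.

Definition is_sol_hom (X Y : Type) (r : X * X -> X * X) (s : Y * Y -> Y * Y)
  (f : X -> Y) : Prop :=
  forall x y, f (ysigma r x y) = ysigma s (f x) (f y).

Definition simple_solution (X : Type) (r : X * X -> X * X) : Prop :=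
  (exists x y : X, x <> y) /\
  forall (Y : Type) (s : Y * Y -> Y * Y) (f : X -> Y),
    is_solution s -> is_sol_hom r s f -> (forall y, exists x, f x = y) ->
    bijective f \/ (exists y0 : Y, forall y, y = y0).

Section Concrete.
Local Open Scope ring_scope.
Variable n : nat.
Variable a : 'Z_n -> 'Z_n.   (* a i = j_i *)

(* sigma_{(i,j)}(k,l) = (k+j, l - a(k+j-i)) *)
Definition zsig (x y : 'Z_n * 'Z_n) : 'Z_n * 'Z_n :=
  (y.1 + x.2, y.2 - a (y.1 + x.2 - x.1)).

Lemma zsig_inj x : injective (zsig x).
Proof.
move=> [k l] [k' l'] E.
have Hk : k + x.2 = k' + x.2 := congr1 fst E.
have Ek : k = k' := addIr _ Hk.
subst k'.
have Hl : l - a (k + x.2 - x.1) = l' - a (k + x.2 - x.1) := congr1 snd E.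
by rewrite (subIr _ Hl).
Qed.

Definition zsigP (x : 'Z_n * 'Z_n) : {perm 'Z_n * 'Z_n} := perm (@zsig_inj x).

Definition zr (p : ('Z_n * 'Z_n) * ('Z_n * 'Z_n)) : ('Z_n * 'Z_n) * ('Z_n * 'Z_n) :=
  (zsig p.1 p.2, ((zsigP (zsig p.1 p.2))^-1)%g p.1).
End Concrete.

From mathcomp Require Import all_boot all_order fingroup perm all_algebra.
From mathcomp Require Import ring.
From Stdlib Require Import Classical ClassicalEpsilon.
Set Implicit Arguments.
Unset Strict Implicit.
Unset Printing Implicit Defensive.
Import GRing.Theory.
Local Open Scope ring_scope.

(* Each sigma_x is a permutation, with explicit inverse; with the
     symmetry a(i) = a(-i) this gives a closed formula for r (zrE), from which
     the braid relation and the bijectivity of the gamma_y are direct ring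
     computations, while r^2 = id holds for the construction
     r(x,y) = (sigma_x y, sigma^-1_(sigma_x y) x) in general.
   - Indecomposability.  sigma_(k-m,0) fixes the first coordinate and
     subtracts a(m) from the second, so the orbit of any point is stable under
     subtracting any element of the group generated by the a(i), i.e. all of
     Z/(n); sigma_(0,1) then moves the first coordinate by 1.
   - Irretractability.  sigma_x(0,0) determines x.2, and sigma_x(k,0)
     determines a(k + x.2 - x.1) for every k, which separates the x.1's.
   - Simplicity.  For a non-injective sigma-compatible map f, repeatedly
     applying sigma_(p,0) (a translation by a unit a(0) - a(i) on the
     difference of second coordinates) produces two points of one row with
     equal images; this forces f to be constant on a column, then on every
     column, then everywhere.  Everything rests on the fact that translations
     by a unit of Z/(n) act transitively (Zp_shift_invariant). *)

Section ZpTranslations.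
Variable n : nat.

Lemma Zp_unit_multiple (u x y : 'Z_n) : u \is a GRing.unit ->
  exists t : nat, y = x + u *+ t.
Proof.
move=> Uu; exists (nat_of_ord ((y - x) / u)).
by rewrite -mulr_natr natr_Zp mulrC divrK // addrC subrK.
Qed.

Lemma Zp_shift_invariant (u : 'Z_n) (P : 'Z_n -> Prop) :
  u \is a GRing.unit -> (forall x, P x -> P (x + u)) ->
  forall x y, P x -> P y.
Proof.
move=> Uu stepP x y Px; have [t ->] := Zp_unit_multiple x y Uu.
elim: t => [|t IH]; first by rewrite mulr0n addr0.
by rewrite mulrSr addrA; apply: stepP.
Qed.
End ZpTranslations.

Section Solution.
Variable n : nat.
Variable a : 'Z_n -> 'Z_n.
Local Notation X := ('Z_n * 'Z_n)%type.

Lemma zsigE (i j k l : 'Z_n) :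
  zsig a (i, j) (k, l) = (k + j, l - a (k + j - i)).
Proof. by []. Qed.

Lemma zsig_invE (x y : X) :
  ((zsigP a x)^-1)%g y = (y.1 - x.2, y.2 + a (y.1 - x.1)).
Proof.
apply: (@perm_inj _ (zsigP a x)); rewrite permKV permE /zsig /=.
by rewrite subrK addrK; case: y.
Qed.

(* r is an involution for every a: it is built as
   (x,y) |-> (sigma_x y, sigma^-1_(sigma_x y) x). *)
Lemma zr_involutive p : zr a (zr a p) = p.
Proof.
case: p => x y; rewrite /zr /=.
have -> : zsig a (zsig a x y) (((zsigP a (zsig a x y))^-1)%g x) = x.
  by have := permKV (zsigP a (zsig a x y)) x; rewrite permE.
by have := permK (zsigP a x) y; rewrite [zsigP a x y]permE => ->.
Qed.

Lemma zr_sigma_bijective x : bijective (ysigma (zr a) x).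
Proof.
exists ((zsigP a x)^-1)%g => y; rewrite /ysigma /zr /=.
  by rewrite -[zsig a x y](permE (@zsig_inj n a x)) permK.
by rewrite -[zsig a x _](permE (@zsig_inj n a x)) permKV.
Qed.

Hypothesis a_sym : forall i : 'Z_n, a i = a (- i).

Lemma zrE (i j k l : 'Z_n) : zr a ((i, j), (k, l)) =
  ((k + j, l - a (k + j - i)), (i - l + a (k + j - i), j + a (k + j - i))).
Proof.
rewrite /zr zsig_invE /= /zsig /=.
by congr (_, (_, _)); [ring | rewrite a_sym opprB].
Qed.

(* gamma_(k,l)(i,j) = (i - l + A, j + A) with A = a(k + j - i); since
   k + (j + A) - (i - l + A) - l = k + j - i, it is inverted explicitly. *)
Lemma zr_gamma_bijective y : bijective (ygamma (zr a) y).
Proof.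
case: y => k l.
exists (fun p : X => let A := a (k + p.2 - p.1 - l) in (p.1 + l - A, p.2 - A)).
  move=> [i j]; rewrite /ygamma zrE /=.
  have -> : k + (j + a (k + j - i)) - (i - l + a (k + j - i)) - l = k + j - i.
    by ring.
  by congr (_, _); ring.
move=> [p q]; rewrite /ygamma zrE /=.
have -> : k + (q - a (k + q - p - l)) - (p + l - a (k + q - p - l))
          = k + q - p - l by ring.
by congr (_, _); ring.
Qed.

(* The braid relation: both sides only involve the three values of a below. *)
Lemma zr_braid t : r12 (zr a) (r23 (zr a) (r12 (zr a) t)) =
   r23 (zr a) (r12 (zr a) (r23 (zr a) t)).
Proof.
case: t => [[[i1 j1] [i2 j2]] [i3 j3]]; rewrite /r12 /r23 !zrE /=.
set A := a (i2 + j1 - i1).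
set C := a (i3 + j2 - i2).
set B := a (i3 + j2 + j1 - i1).
have -> : i3 + (j1 + A) - (i1 - j2 + A) = i3 + j2 + j1 - i1 by ring.
have -> : i3 + (j1 + A) + (j2 - A) - (i2 + j1) = i3 + j2 - i2 by ring.
have -> : i2 - j3 + C + (j1 + B) - (i1 - (j3 - C) + B) = i2 + j1 - i1 by ring.
by rewrite -/A -/B -/C; congr (_, _, (_, _), (_, _)); ring.
Qed.

Lemma zr_solution : is_solution (zr a).
Proof.
split; [exact: zr_involutive | exact: zr_sigma_bijective
       | exact: zr_gamma_bijective | exact: zr_braid].
Qed.
End Solution.

Section Indecomposable.
Variable n : nat.
Variable a : 'Z_n -> 'Z_n.
Local Notation X := ('Z_n * 'Z_n)%type.
Hypothesis a_gen : (<<[set a i | i : 'Z_n]>>)%g = [set: 'Z_n].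

Definition reachable (x y : X) : Prop :=
  exists2 g, in_sigma_group (zr a) g & g x = y.

Lemma reachable_refl x : reachable x x.
Proof. by exists id => //; exact: sg_id. Qed.

Lemma reachable_sigma x y z : reachable x y -> reachable x (zsig a z y).
Proof.
by case=> g Hg <-; exists (ysigma (zr a) z \o g) => //; exact: sg_sigma.
Qed.

(* sigma_(k-m,0) maps (k,l) to (k, l - a(m)). *)
Lemma reachable_sub_a x k l m : reachable x (k, l) -> reachable x (k, l - a m).
Proof.
move=> /(reachable_sigma (k - m, 0)); rewrite zsigE addr0.
by have -> : k - (k - m) = m by ring.
Qed.

(* Iterating: one may subtract any finite sum of values of a (the group law
   of 'Z_n as a finGroupType is addition). *)
Lemma reachable_sub_sum x N (c : 'I_N -> 'Z_n) :
  (forall i, c i \in [set a i | i : 'Z_n]) ->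
  forall k l, reachable x (k, l) -> reachable x (k, l - (\prod_i c i)%g).
Proof.
elim: N c => [|N IH] c c_a k l R.
  by rewrite big_ord0 [1%g]/(0 : 'Z_n) subr0.
rewrite big_ord_recr /= [(_ * _)%g]/(_ + _) opprD addrA.
have /imsetP[m _ ->] := c_a ord_max.
by apply: reachable_sub_a; apply: IH => // i; exact: c_a.
Qed.

(* Since the a(i) generate Z/(n), the second coordinate is arbitrary. *)
Lemma reachable_second x k l l' : reachable x (k, l) -> reachable x (k, l').
Proof.
move=> R; have : l - l' \in <<[set a i | i : 'Z_n]>>%g by rewrite a_gen inE.
case/gen_prodgP => N [c c_a e].
have := reachable_sub_sum c_a R; rewrite -e.
by have -> : l - (l - l') = l' by ring.
Qed.

Lemma zr_indecomposable : indecomposable (zr a).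
Proof.
move=> x0 [k l].
have step : forall k', (forall l', reachable x0 (k', l')) ->
    forall l', reachable x0 (k' + 1, l').
  move=> k' R l'; have := reachable_sigma (0, 1) (R 0); rewrite zsigE.
  exact: reachable_second.
have start : forall l', reachable x0 (x0.1, l').
  by case: x0 step => k0 l0 _ l'; apply: reachable_second (reachable_refl _).
exact: (@Zp_shift_invariant n 1 (fun k' => forall l', reachable x0 (k', l'))
          (unitr1 _) step _ k start).
Qed.
End Indecomposable.

Section Irretractable.
Variable n : nat.
Variable a : 'Z_n -> 'Z_n.
Hypothesis a_nonperiodic :
  forall i : 'Z_n, i != 0 -> exists k, a (i + k) != a k.

(* sigma_(i,j)(0,0) has first coordinate j, and for j = j' the second
   coordinates of sigma_(i,j)(k - j, 0) and sigma_(i',j)(k - j, 0) are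
   -a(k - i) and -a(k - i'); the non-periodicity of a separates i from i'. *)
Lemma zr_irretractable : irretractable (zr a).
Proof.
move=> [i j] [i' j'] ne E.
have sig_eq y : zsig a (i, j) y = zsig a (i', j') y.
  exact: (congr1 (@^~ y) E).
have ej : j = j' by move: (congr1 fst (sig_eq (0, 0))); rewrite !zsigE !add0r.
subst j'; have di : i' - i != 0.
  by rewrite subr_eq0; apply/eqP => ei; apply: ne; rewrite ei.
have [k /eqP[]] := a_nonperiodic di.
move: (congr1 snd (sig_eq (i' + k - j, 0))); rewrite !zsigE /= !sub0r.
have -> : i' + k - j + j - i = i' - i + k by ring.
have -> : i' + k - j + j - i' = k by ring.
exact: oppr_inj.
Qed.
End Irretractable.

Section Simplicity.
Variable n : nat.
Variable a : 'Z_n -> 'Z_n.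
Local Notation X := ('Z_n * 'Z_n)%type.
Hypothesis a_unit : forall i : 'Z_n, i != 0 -> (a 0 - a i) \is a GRing.unit.

(* f is compatible with the sigma maps: f (sigma_x y) depends only on f x and
   f y.  This is all that is used of a homomorphism of solutions. *)
Variables (Y : Type) (f : X -> Y) (g : Y -> Y -> Y).
Hypothesis f_hom : forall x y, f (zsig a x y) = g (f x) (f y).

Lemma hom_congr_l x x' y : f x = f x' -> f (zsig a x y) = f (zsig a x' y).
Proof. by move=> e; rewrite !f_hom e. Qed.

Lemma hom_congr_r x y y' : f y = f y' -> f (zsig a x y) = f (zsig a x y').
Proof. by move=> e; rewrite !f_hom e. Qed.

(* Two identified points in different columns yield two identified points
   in one row: sigma_(p1,0) sends (p1,r1) to (p1, r1 - a 0) and (p2,r2) to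
   (p2, r2 - a(p2 - p1)), so iterating it moves the difference of the second
   coordinates by multiples of the unit a 0 - a(p2 - p1). *)
Lemma identified_in_row p1 q1 p2 q2 : f (p1, q1) = f (p2, q2) -> p1 != p2 ->
  exists q, f (p1, q) = f (p2, q).
Proof.
move=> E ne; set u := a 0 - a (p2 - p1).
have iterate t : f (p1, q1 - a 0 *+ t) = f (p2, q2 - a (p2 - p1) *+ t).
  elim: t => [|t IH]; first by rewrite !mulr0n !subr0.
  have := hom_congr_r (p1, 0) IH; rewrite !zsigE !addr0 subrr.
  by rewrite !mulrSr !opprD !addrA.
have [t q1E] : exists t : nat, q1 = q2 + u *+ t.
  by apply: Zp_unit_multiple; apply: a_unit; rewrite subr_eq0 eq_sym.
exists (q1 - a 0 *+ t); rewrite iterate; congr (f (_, _)).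
by rewrite q1E /u mulrnBl; ring.
Qed.

(* Two identified points in one row make f constant on a column:
   sigma_(p1,q) and sigma_(p2,q) send (p1 - q, l + a 0) to (p1, l) and
   (p1, l + a 0 - a(p1 - p2)), and a 0 - a(p1 - p2) is a unit. *)
Lemma column_constant p1 p2 q : f (p1, q) = f (p2, q) -> p1 != p2 ->
  forall l l', f (p1, l) = f (p1, l').
Proof.
move=> E ne l; set u := a 0 - a (p1 - p2).
have shift l' : f (p1, l') = f (p1, l' + u).
  have := hom_congr_l (p1 - q, l' + a 0) E; rewrite !zsigE.
  have -> : p1 - q + q = p1 by ring.
  by rewrite subrr addrK => ->; congr (f (_, _)); rewrite /u; ring.
have Uu : u \is a GRing.unit by apply: a_unit; rewrite subr_eq0.
move=> l'; apply: (@Zp_shift_invariant n u (fun m => f (p1, l) = f (p1, m)) Uu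
  _ l) => // m ->; exact: shift.
Qed.

(* If f is constant on one column it is constant: sigma_(0,k-p) carries that
   column onto column k, and sigma_(p,0), sigma_(p,1) (identified by f) carry
   (k,l) to column k and column k + 1 respectively. *)
Lemma constant_of_column p : (forall l l', f (p, l) = f (p, l')) ->
  forall x, f x = f (0, 0).
Proof.
move=> col.
have columns k l l' : f (k, l) = f (k, l').
  have := hom_congr_r (0, k - p) (col (l + a k) (l' + a k)); rewrite !zsigE.
  have -> : p + (k - p) = k by ring.
  by rewrite subr0 !addrK.
have next k l l' : f (k, l) = f (k + 1, l').
  have := hom_congr_l (k, l) (col 0 1); rewrite !zsigE addr0 => e.
  by rewrite (columns k l (l - a (k - p))) e; apply: columns.
have step k : (forall l, f (k, l) = f (0, 0)) ->
    forall l, f (k + 1, l) = f (0, 0).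
  by move=> e l; rewrite -(next k 0 l) e.
move=> [k l].
exact: (@Zp_shift_invariant n 1 (fun k => forall l, f (k, l) = f (0, 0))
          (unitr1 _) step 0 k (fun l => columns 0 l 0) l).
Qed.

(* A sigma-compatible map identifying two distinct points is constant; two
   points in one column (p,q1), (p,q2) are first moved by sigma_(p,q1) and
   sigma_(p,q2) to the distinct columns q1 and q2. *)
Lemma constant_of_not_injective x x' : x <> x' -> f x = f x' ->
  forall y, f y = f (0, 0).
Proof.
have distinct_columns p1 q1 p2 q2 : f (p1, q1) = f (p2, q2) -> p1 != p2 ->
    forall y, f y = f (0, 0).
  move=> E ne; have [q Eq] := identified_in_row E ne.
  exact: constant_of_column (column_constant Eq ne).
case: x x' => [p1 q1] [p2 q2] ne E; have [ep|] := eqVneq p1 p2; last first.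
  exact: distinct_columns E.
subst p2; have nq : q1 != q2 by apply/eqP => eq; apply: ne; rewrite eq.
have := hom_congr_l (0, 0) E; rewrite !zsigE !add0r => E'.
exact: distinct_columns E' nq.
Qed.
End Simplicity.

Lemma inj_surj_bijective (A B : Type) (h : A -> B) :
  injective h -> (forall b, exists a, h a = b) -> bijective h.
Proof.
move=> inj_h surj_h.
exists (fun b => proj1_sig (constructive_indefinite_description _ (surj_h b))).
  by move=> x; apply: inj_h; case: constructive_indefinite_description.
by move=> y; case: constructive_indefinite_description.
Qed.

Lemma zr_simple n (a : 'Z_n -> 'Z_n) :
  (forall i : 'Z_n, i != 0 -> (a 0 - a i) \is a GRing.unit) ->
  simple_solution (zr a).
Proof.
move=> a_unit; split.
  by exists (0, 0), (0, 1) => -[] /esym /eqP; rewrite oner_eq0.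
move=> Y s f _ f_hom f_surj.
have [[x [x' [ne E]]] | inj_f] :=
  classic (exists x x', x <> x' /\ f x = f x').
  right; exists (f (0, 0)) => y; have [z <-] := f_surj y.
  exact: (constant_of_not_injective a_unit f_hom ne E).
left; apply: inj_surj_bijective f_surj => x x' E.
by apply: NNPP => ne; apply: inj_f; exists x, x'.
Qed.

Theorem mainTheorem6 (n : nat) (hn : (1 < n)%N) (a : 'Z_n -> 'Z_n)
  (hsym : forall i : 'Z_n, a i = a (- i))
  (hnd : forall i : 'Z_n, i != 0 -> exists k : 'Z_n, a (i + k) != a k)
  (hgen : (<<[set a i | i : 'Z_n]>>)%g = [set: 'Z_n]) :
  (is_solution (zr a) /\ indecomposable (zr a) /\ irretractable (zr a)) /\
  ((forall i : 'Z_n, i != 0 -> (a 0 - a i) \is a GRing.unit) ->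
     simple_solution (zr a)).
Proof.
split; last exact: zr_simple.
split; first exact: zr_solution.
split; [exact: zr_indecomposable | exact: zr_irretractable].
Qed.
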